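(* Let $\phi:V\to V$ be a continuous coherency preserver. Assume that $\phi$ is constant on some coherent line, i.e. on some line $a+\mathbb{R}x$ with $a\in V$ and $x\in V\setminus\{0\}$, $q(x)=0$. Then $\phi$ is degenerate.
   Context: Fix an integer $n\ge4$, let $V=\mathbb{R}^n$ with its standard topology and $q(x_1,\dots,x_n)=x_n^2-\sum_{k=1}^{n-1}x_k^2$. Points $x,y$ are coherent when $q(x-y)=0$. For $a\in V$, $\mathcal{C}(a)=\{m\in V: q(m-a)=0\}$. A coherency preserver is a map $\phi:V\to V$ such that $q(b-a)=0$ implies $q(\phi(b)-\phi(a))=0$; it is degenerate when its range is included in $\mathcal{C}(c)$ for some $c\in V$. *)

(* V = R^n is the row-vector space 'rV[R]_n
   over R : realType, with its canonical (product = standard) topology. *)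
From HB Require Import structures.
From mathcomp Require Import all_boot all_order all_algebra.
From mathcomp Require Import all_classical all_reals all_analysis.
Set Implicit Arguments. Unset Strict Implicit. Unset Printing Implicit Defensive.
Import Order.TTheory GRing.Theory Num.Theory.
Import numFieldNormedType.Exports.
Local Open Scope ring_scope.
Local Open Scope classical_set_scope.

(* q(x) = x_n^2 - sum_{k=1}^{n-1} x_k^2 ; coordinate x_n is the index n.-1 (0-based) *)
Definition q (R : realType) (n : nat) (x : 'rV[R]_n) : R :=
  \sum_(i < n | nat_of_ord i == n.-1) x 0 i ^+ 2
  - \sum_(i < n | nat_of_ord i != n.-1) x 0 i ^+ 2.

Definition coherent (R : realType) (n : nat) (x y : 'rV[R]_n) : Prop :=
  q (x - y) = 0.

Definition cone (R : realType) (n : nat) (a : 'rV[R]_n) : set 'rV[R]_n :=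
  [set m | q (m - a) = 0].

Definition coherency_preserver (R : realType) (n : nat)
  (phi : 'rV[R]_n -> 'rV[R]_n) : Prop :=
  forall a b : 'rV[R]_n, q (b - a) = 0 -> q (phi b - phi a) = 0.

Definition degenerate (R : realType) (n : nat)
  (phi : 'rV[R]_n -> 'rV[R]_n) : Prop :=
  exists c : 'rV[R]_n, range phi `<=` cone c.

From HB Require Import structures.
From mathcomp Require Import all_boot all_order all_algebra.
From mathcomp Require Import all_classical all_reals all_analysis.
From mathcomp Require Import ring.
Import Order.TTheory GRing.Theory Num.Theory.
Import numFieldNormedType.Exports.
Local Open Scope ring_scope.
Local Open Scope classical_set_scope.
Set Implicit Arguments. Unset Strict Implicit.

(* Let [phi] take the value [c] on the coherent line [a + R x]. A point [y] with
   [qbil (y - a) x != 0] is coherent with exactly one point of that line, since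
   [q (y - a - t x)] is affine in [t] with nonzero slope; hence [phi y] lies on
   the cone [C(c)]. These points are dense (the polar form is nondegenerate), and
   [y |-> q (phi y - c)] is continuous, so [phi] maps everything into [C(c)]. *)

Section PolarForm.
Variables (R : realType) (n : nat).
Implicit Types (u v w : 'rV[R]_n) (t : R).

Definition qbil u v : R :=
  \sum_(i < n | nat_of_ord i == n.-1) u 0 i * v 0 i
  - \sum_(i < n | nat_of_ord i != n.-1) u 0 i * v 0 i.

Lemma q_addZ u v t : q (u + t *: v) = q u + 2 * t * qbil u v + t ^+ 2 * q v.
Proof.
have sumE (P : pred 'I_n) : \sum_(i | P i) ((u + t *: v) 0 i) ^+ 2 =
    \sum_(i | P i) u 0 i ^+ 2 + 2 * t * \sum_(i | P i) u 0 i * v 0 i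
    + t ^+ 2 * \sum_(i | P i) v 0 i ^+ 2.
  rewrite !mulr_sumr -!big_split; apply: eq_bigr => i _; rewrite !mxE /=; ring.
by rewrite /q /qbil !sumE; ring.
Qed.

Lemma qbil_addZl u v w t : qbil (u + t *: v) w = qbil u w + t * qbil v w.
Proof.
have sumE (P : pred 'I_n) : \sum_(i | P i) (u + t *: v) 0 i * w 0 i =
    \sum_(i | P i) u 0 i * w 0 i + t * \sum_(i | P i) v 0 i * w 0 i.
  rewrite !mulr_sumr -!big_split; apply: eq_bigr => i _; rewrite !mxE /=; ring.
by rewrite /qbil !sumE; ring.
Qed.

(* The witness flips the signs of the space coordinates, turning [qbil] into
   the Euclidean inner product. *)
Lemma qbil_nondegenerate w : w != 0 -> exists v, qbil v w != 0.
Proof.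
move=> w0; pose v := \row_j (if nat_of_ord j == n.-1 then w 0 j else - w 0 j).
exists v; have -> : qbil v w = \sum_j w 0 j ^+ 2.
  rewrite /qbil [RHS](bigID (fun j : 'I_n => nat_of_ord j == n.-1)) /=.
  rewrite -sumrN; congr (_ + _); apply: eq_bigr => i Hi; rewrite mxE ?Hi expr2 //.
  by rewrite (negbTE Hi) mulNr opprK.
apply: contra w0 => /eqP /psumr_eq0P w2_eq0; apply/eqP/rowP => j.
have /eqP := w2_eq0 (fun i _ => sqr_ge0 (w 0 i)) j isT.
by rewrite sqrf_eq0 mxE => /eqP.
Qed.

Lemma continuous_q : continuous (@q R n).
Proof.
have sq_continuous (P : pred 'I_n) :
    continuous (fun z : 'rV[R]_n => \sum_(i | P i) z 0 i ^+ 2).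
  apply: continuous_big; first exact: add_continuous.
  move=> i _ z.
  exact: continuous_comp (@coord_continuous R 1 n 0 i z) (@exprn_continuous R 2 _).
by move=> y; apply: continuousB; apply: sq_continuous.
Qed.

Lemma continuous_q_subr c : continuous (fun v => q (v - c)).
Proof.
move=> v; have shift_cont : {for v, continuous (fun v : 'rV[R]_n => v - c)}.
  by apply: continuousB; [exact: cvg_id | exact: cst_continuous].
by have := continuous_comp shift_cont (@continuous_q _).
Qed.

Lemma coherent_with_isotropic_line a v w :
  q w = 0 -> qbil (v - a) w != 0 -> exists t, q (v - (a + t *: w)) = 0.
Proof.
move=> qw0 vw0; exists (q (v - a) / (2 * qbil (v - a) w)).
rewrite opprD addrA -scaleNr q_addZ qw0; field; exact: vw0.
Qed.

End PolarForm.

Lemma continuous_eq0_dnbhs (R : realType) (g : R -> R) :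
  {for 0, continuous g} -> (\forall s \near 0^', g s = 0) -> g 0 = 0.
Proof.
move=> /continuous_withinNx g_cvg g0_near.
have g_cvg0 : g s @[s --> 0^'] --> 0 by apply: cvg_near_cst.
exact: esym (cvg_unique _ g_cvg0 g_cvg).
Qed.

Theorem proposition4p1 (R : realType) (n : nat) (phi : 'rV[R]_n -> 'rV[R]_n) :
  (4 <= n)%N ->
  continuous phi ->
  coherency_preserver phi ->
  (exists (a x : 'rV[R]_n) (c : 'rV[R]_n),
      x != 0 /\ q x = 0 /\ (forall t : R, phi (a + t *: x) = c)) ->
  degenerate phi.
Proof.
move=> _ phi_cont phi_coh [a [x [c [x0 [qx0 phi_line]]]]].
have on_cone y : qbil (y - a) x != 0 -> q (phi y - c) = 0.
  move=> /(coherent_with_isotropic_line qx0) [t yt].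
  by rewrite -(phi_line t); apply: phi_coh.
exists c => _ [m _ <-]; rewrite /cone /=.
have [e ex0] := qbil_nondegenerate x0.
have [mx0|] := eqVneq (qbil (m - a) x) 0; last exact: on_cone.
pose g s := q (phi (m + s *: e) - c).
suff : g 0 = 0 by rewrite /g scale0r addr0.
apply: continuous_eq0_dnbhs.
  have line_cont : continuous (fun s : R => m + s *: e).
    by move=> s; apply: cvgD; [exact: cvg_cst | apply: cvgZr_tmp; exact: cvg_id].
  by have := continuous_comp (continuous_comp (line_cont 0) (phi_cont _))
    (@continuous_q_subr R n c _).
near=> s; apply: on_cone.
rewrite addrAC qbil_addZl mx0 add0r mulf_neq0 //.
near: s; exact: nbhs_dnbhs_neq.
Unshelve. all: by end_near.
Qed.
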